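(* Let $n\ge 1$ and $\psi,\eta\in(0,1)^n$. Let $Y\in\{0,1\}$ be a random bit with $\mathbb{P}(Y=1)=\mathbb{P}(Y=0)=1/2$, and conditionally on $Y$ let $X_1,\ldots,X_n\in\{0,1\}$ be independent with $\mathbb{P}(X_i=1\mid Y=1)=\psi_i$ and $\mathbb{P}(X_i=0\mid Y=0)=\eta_i$. Let $f^{\mathrm{OPT}}:\{0,1\}^n\to\{0,1\}$ be a decision rule minimizing $\mathbb{P}(f(X)\neq Y)$ over all $f:\{0,1\}^n\to\{0,1\}$, where $X=(X_1,\ldots,X_n)$. Then, with $\pi_i=(\psi_i+\eta_i)/2$, $$\mathbb{P}(f^{\mathrm{OPT}}(X)\neq Y)\le\frac12\sqrt{\prod_{i=1}^n(\psi_i+\eta_i)(2-\psi_i-\eta_i)}=\frac12\cdot 2^n\sqrt{\prod_{i=1}^n\pi_i(1-\pi_i)} .$$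
   Context: $\pi_i=(\psi_i+\eta_i)/2$ is called the balanced accuracy of expert $i$; $\psi_i$ is its sensitivity and $\eta_i$ its specificity. *)

From HB Require Import structures.
From mathcomp Require Import all_boot all_order all_algebra.
Set Implicit Arguments. Unset Strict Implicit. Unset Printing Implicit Defensive.
Import Order.TTheory GRing.Theory Num.Theory.
Local Open Scope ring_scope.

Section Experts.
Variables (R : rcfType) (n : nat) (psi eta : 'I_n -> R).

Definition cond_prob (y : bool) (i : 'I_n) (b : bool) : R :=
  if y then (if b then psi i else 1 - psi i)
  else (if b then 1 - eta i else eta i).

(* Joint law: P(Y = y, X = x) = 1/2 * prod_i P(X_i = x_i | Y = y),
   i.e. Y uniform and X_1..X_n conditionally independent given Y. *)
Definition joint (y : bool) (x : {ffun 'I_n -> bool}) : R :=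
  2^-1 * \prod_(i < n) cond_prob y i (x i).

Definition err (f : {ffun 'I_n -> bool} -> bool) : R :=
  \sum_(x : {ffun 'I_n -> bool}) \sum_(y : bool | f x != y) joint y x.

Definition bal_acc (i : 'I_n) : R := (psi i + eta i) / 2.

End Experts.

From HB Require Import structures.
From mathcomp Require Import all_boot all_order all_algebra.
From mathcomp Require Import ring lra.
Set Implicit Arguments. Unset Strict Implicit. Unset Printing Implicit Defensive.
Import Order.TTheory GRing.Theory Num.Theory.
Local Open Scope ring_scope.

(* The optimal rule errs at most as often as the Bayes (MAP) rule, whose error
   is the sum over x of min(P(Y=1, X=x), P(Y=0, X=x)). Bounding min(u, v) by
   sqrt(u v) gives the Bhattacharyya coefficient, which factorizes over the
   conditionally independent experts; each factor
   sqrt(psi (1 - eta)) + sqrt(eta (1 - psi)) is at most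
   sqrt((psi + eta) (2 - psi - eta)) by Cauchy-Schwarz. *)

Lemma min_le_sqrtM (R : rcfType) (u v : R) :
  0 <= u -> 0 <= v -> Num.min u v <= Num.sqrt (u * v).
Proof.
move=> u0 v0; have m0 : 0 <= Num.min u v by rewrite le_min u0.
rewrite -[Num.min u v]ger0_norm // -sqrtr_sqr ler_sqrt ?mulr_ge0 // expr2.
by apply: ler_pM => //; rewrite ge_min lexx ?orbT.
Qed.

Lemma sqr_add_sqrtM_le (R : rcfType) (p q r s : R) :
  0 <= p -> 0 <= q -> 0 <= r -> 0 <= s ->
  (Num.sqrt (p * r) + Num.sqrt (q * s)) ^+ 2 <= (p + q) * (r + s).
Proof.
move=> p0 q0 r0 s0.
have sqr_sqrtM (a b : R) : 0 <= a -> 0 <= b -> Num.sqrt (a * b) ^+ 2 = a * b.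
  by move=> a0 b0; rewrite sqr_sqrtr ?mulr_ge0.
set X := Num.sqrt (p * r); set Y := Num.sqrt (q * s).
set U := Num.sqrt (p * s); set V := Num.sqrt (q * r).
have XY_UV : X * Y = U * V.
  by rewrite -!sqrtrM ?mulr_ge0 //; congr Num.sqrt; ring.
have := sqr_sqrtM p r p0 r0; have := sqr_sqrtM q s q0 s0.
have := sqr_sqrtM p s p0 s0; have := sqr_sqrtM q r q0 r0.
have : 0 <= (U - V) ^+ 2 by rewrite sqr_ge0.
rewrite -/X -/Y -/U -/V !expr2; nra.
Qed.

Lemma prod_le_sqrt_prod (R : rcfType) (I : finType) (t b : I -> R) :
  (forall i, 0 <= t i) -> (forall i, t i ^+ 2 <= b i) ->
  \prod_i t i <= Num.sqrt (\prod_i b i).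
Proof.
move=> t0 tb; have tb0 i : 0 <= b i by rewrite (le_trans (sqr_ge0 (t i))).
rewrite -[\prod_i t i]ger0_norm; last exact: prodr_ge0.
rewrite -sqrtr_sqr -prodrXl ler_sqrt; last exact: prodr_ge0.
by apply: ler_prod => i _; rewrite sqr_ge0 tb.
Qed.

Lemma sqrtr_prod (R : rcfType) (I : Type) (r : seq I) (F : I -> R) :
  (forall i, 0 <= F i) ->
  Num.sqrt (\prod_(i <- r) F i) = \prod_(i <- r) Num.sqrt (F i).
Proof.
move=> F0; elim: r => [|i r IHr]; first by rewrite !big_nil sqrtr1.
by rewrite !big_cons sqrtrM // IHr.
Qed.

Section Experts.
Variables (R : rcfType) (n : nat) (psi eta : 'I_n -> R).
Hypotheses (psi01 : forall i, 0 <= psi i <= 1) (eta01 : forall i, 0 <= eta i <= 1).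

Lemma cond_prob_ge0 y i b : 0 <= cond_prob psi eta y i b.
Proof.
have /andP[? ?] := psi01 i; have /andP[? ?] := eta01 i.
by rewrite /cond_prob; case: y; case: b; lra.
Qed.

Lemma joint_ge0 y x : 0 <= joint psi eta y x.
Proof.
by rewrite /joint mulr_ge0 ?invr_ge0 ?ler0n //; apply: prodr_ge0 => i _;
  apply: cond_prob_ge0.
Qed.

Definition bayes_rule (x : {ffun 'I_n -> bool}) : bool :=
  joint psi eta false x <= joint psi eta true x.

Lemma err_bayes_rule :
  err psi eta bayes_rule
    = \sum_x Num.min (joint psi eta true x) (joint psi eta false x).
Proof.
apply: eq_bigr => x _; rewrite big_mkcond big_bool /= /bayes_rule.
by case: lerP => /=; rewrite ?add0r ?addr0.
Qed.

Lemma sqrt_jointM x :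
  Num.sqrt (joint psi eta true x * joint psi eta false x)
    = 2^-1 * \prod_i Num.sqrt (cond_prob psi eta true i (x i)
                               * cond_prob psi eta false i (x i)).
Proof.
rewrite /joint mulrACA -expr2 sqrtrM ?exprn_ge0 ?invr_ge0 ?ler0n //.
rewrite sqrtr_sqr ger0_norm ?invr_ge0 ?ler0n // -big_split.
by rewrite sqrtr_prod // => i; rewrite mulr_ge0 ?cond_prob_ge0.
Qed.

Lemma sum_sqrt_jointM :
  \sum_x Num.sqrt (joint psi eta true x * joint psi eta false x)
    = 2^-1 * \prod_i (Num.sqrt (psi i * (1 - eta i))
                      + Num.sqrt (eta i * (1 - psi i))).
Proof.
rewrite (eq_bigr _ (fun x _ => sqrt_jointM x)).
rewrite -mulr_sumr -(bigA_distr_bigA (fun i b =>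
  Num.sqrt (cond_prob psi eta true i b * cond_prob psi eta false i b))) /=.
congr (_ * _).
by apply: eq_bigr => i _; rewrite big_bool /= [(1 - psi i) * _]mulrC.
Qed.

Lemma err_bayes_rule_le :
  err psi eta bayes_rule
    <= 2^-1 * Num.sqrt (\prod_i ((psi i + eta i) * (2 - psi i - eta i))).
Proof.
rewrite err_bayes_rule.
apply: le_trans (ler_sum _ (fun x _ =>
  min_le_sqrtM (joint_ge0 true x) (joint_ge0 false x))) _.
rewrite sum_sqrt_jointM ler_pM2l ?invr_gt0 ?ltr0n //.
apply: prod_le_sqrt_prod => i; first by rewrite addr_ge0 ?sqrtr_ge0.
have /andP[? ?] := psi01 i; have /andP[? ?] := eta01 i.
have -> : 2 - psi i - eta i = (1 - eta i) + (1 - psi i) by ring.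
by rewrite sqr_add_sqrtM_le ?subr_ge0.
Qed.

End Experts.

Lemma sqrt_prod_bal_acc (R : rcfType) (n : nat) (psi eta : 'I_n -> R) :
  Num.sqrt (\prod_i ((psi i + eta i) * (2 - psi i - eta i)))
    = 2 ^+ n * Num.sqrt (\prod_i (bal_acc psi eta i * (1 - bal_acc psi eta i))).
Proof.
rewrite (eq_bigr (fun i => 2 ^+ 2 * (bal_acc psi eta i * (1 - bal_acc psi eta i))));
  last by move=> i _; rewrite /bal_acc; field.
rewrite big_split /= prodr_const card_ord -exprM mulnC exprM.
by rewrite sqrtrM ?exprn_ge0 ?ler0n // sqrtr_sqr ger0_norm ?exprn_ge0 ?ler0n.
Qed.

Theorem theorem2 (R : rcfType) (n : nat) (psi eta : 'I_n -> R)
  (hn : (1 <= n)%N)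
  (hpsi : forall i, 0 < psi i < 1) (heta : forall i, 0 < eta i < 1)
  (fopt : {ffun 'I_n -> bool} -> bool)
  (hopt : forall f : {ffun 'I_n -> bool} -> bool, err psi eta fopt <= err psi eta f) :
  err psi eta fopt
    <= 2^-1 * Num.sqrt (\prod_(i < n) ((psi i + eta i) * (2 - psi i - eta i)))
  /\ 2^-1 * Num.sqrt (\prod_(i < n) ((psi i + eta i) * (2 - psi i - eta i)))
     = 2^-1 * 2 ^+ n * Num.sqrt (\prod_(i < n) (bal_acc psi eta i * (1 - bal_acc psi eta i))).
Proof.
have closed01 (a : 'I_n -> R) i : 0 < a i < 1 -> 0 <= a i <= 1.
  by case/andP=> ? ?; rewrite !ltW.
split; last by rewrite sqrt_prod_bal_acc mulrA.
apply: le_trans (hopt (bayes_rule psi eta)) _.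
by apply: err_bayes_rule_le => i; apply: closed01.
Qed.
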